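(* Let $\nu\ge0$, $\omega_{av}(0)\in\mathbb{R}$, $v_c(0)\in\mathbb{C}$ with $v_c(0)\ne-1$, and $\omega_{-1}(0)\in\mathbb{C}\setminus\{0\}$, and let $(\omega_{-1}(t),v_c(t),\omega_{av}(t))$ solve $$\frac{d\omega_{-1}}{dt}=(\mathrm{i}\omega_{av}-\nu)\omega_{-1}+\frac{2\omega_{-1}^2}{1+v_c},\qquad\frac{dv_c}{dt}=\omega_{-1},\qquad\frac{d\omega_{av}}{dt}=-\nu\omega_{av}$$ on a time interval $I\ni 0$. Then the trajectory $\{v_c(t):t\in I\}$ is contained in a circle or a straight line in $\mathbb{C}$. More precisely, when $\omega_{av}(0)=0$, one has $v_c(t)=\frac{v_c(0)+1}{1-\Omega\theta(t)}-1$ with $\Omega=\frac{\omega_{-1}(0)}{1+v_c(0)}$ and $\theta(t)=\frac{1-e^{-\nu t}}{\nu}$ ($\theta(t)=t$ if $\nu=0$), and the trajectory lies on a circle if $\mathrm{Im}\,\Omega\ne0$ and on a straight line if $\mathrm{Im}\,\Omega=0$.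
   Context: These are the pole dynamics equations for the generalized Constantin–Lax–Majda equation with $a=0$, $\sigma=0$ on the circle, for a solution $\tilde\omega=\omega_++\omega_-+\omega_{av}$ with $\omega_-(x,t)=\omega_{-1}(t)\left[\frac{1}{\tan(x/2)-\mathrm{i}v_c(t)}-\frac{1}{-\mathrm{i}-\mathrm{i}v_c(t)}\right]$ and $\omega_+(x,t)=\overline{\omega_-(\bar x,t)}$. *)

From Stdlib Require Import Reals.
From Coquelicot Require Import Coquelicot.
Open Scope R_scope.

Definition theta (nu t : R) : R :=
  if Req_EM_T nu 0 then t else (1 - exp (- nu * t)) / nu.

Definition in_interval (a b : Rbar) (t : R) : Prop :=
  Rbar_lt a t /\ Rbar_lt t b.

Definition on_circle (S : R -> Prop) (f : R -> C) : Prop :=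
  exists (c : C) (r : R), 0 < r /\ forall t, S t -> Cmod (f t - c) = r.

Definition on_line (S : R -> Prop) (f : R -> C) : Prop :=
  exists (p d : C), d <> 0%C /\
    forall t, S t -> exists s : R, f t = (p + RtoC s * d)%C.

From Stdlib Require Import Reals Lra FunctionalExtensionality.
From Coquelicot Require Import Coquelicot.
Open Scope R_scope.

(* With zeta := 1/(1 + v_c) and eta := omega_{-1} zeta^2 the system becomes
   linear: zeta' = -eta and eta' = (i omega_av - nu) eta, while
   omega_av = omega_av(0) e^{-nu t}.  If omega_av(0) = 0, then
   eta = eta(0) e^{-nu t}, hence zeta = zeta(0) - eta(0) theta(t) is affine in
   theta and v_c = 1/zeta - 1 is the stated Moebius image of a real parameter.
   Otherwise omega_av never vanishes and rho := eta / omega_av satisfies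
   rho' = i eta = i omega_av rho; so zeta - i rho and |rho| are both conserved,
   zeta stays on a circle, and its inverse on a circle or a line. *)

Lemma is_derive_fst (f : R -> C) x l :
  is_derive f x l -> is_derive (fun t => fst (f t)) x (fst l).
Proof. intros H; exact (filterdiff_comp _ _ _ _ H (filterdiff_linear _ is_linear_fst)). Qed.

Lemma is_derive_snd (f : R -> C) x l :
  is_derive f x l -> is_derive (fun t => snd (f t)) x (snd l).
Proof. intros H; exact (filterdiff_comp _ _ _ _ H (filterdiff_linear _ is_linear_snd)). Qed.

Lemma is_derive_pair (f : R -> C) x l :
  is_derive (fun t => fst (f t)) x (fst l) -> is_derive (fun t => snd (f t)) x (snd l) ->
  is_derive f x l.
Proof.
  intros H1 H2. destruct l as [l1 l2]. unfold is_derive in *.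
  apply (filterdiff_ext (fun t => (fst (f t), snd (f t)))).
  { intros y; destruct (f y); reflexivity. }
  refine (filterdiff_ext_lin _ _ _ (filterdiff_comp'_2 (fun t => fst (f t)) (fun t => snd (f t))
    (fun a b => (a, b)) x _ _ (fun a b => (a, b)) H1 H2 _) _).
  - apply (filterdiff_ext_lin _ (fun t => t)).
    + apply filterdiff_ext with (fun t => t); [intros [? ?]; reflexivity | apply filterdiff_id].
    + intros [? ?]; reflexivity.
  - intros y; reflexivity.
Qed.

Lemma C_fun_components (f : R -> C) : exists f1 f2 : R -> R, f = (fun t => (f1 t, f2 t)).
Proof.
  exists (fun t => fst (f t)), (fun t => snd (f t)).
  apply functional_extensionality; intros t; destruct (f t); reflexivity.
Qed.

(* Splits every complex-valued function into two real ones, so that [auto_derive]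
   can treat them as unknown derivable functions. *)
Ltac derive_components :=
  repeat match goal with
  | f : R -> C |- _ =>
      let f1 := fresh f "1" in let f2 := fresh f "2" in
      destruct (C_fun_components f) as (f1 & f2 & ->)
  end;
  repeat match goal with
  | H : is_derive (fun t => (?f1 t, ?f2 t)) ?x ?l |- _ =>
      pose proof (is_derive_fst _ x l H); pose proof (is_derive_snd _ x l H); clear H
  end;
  apply is_derive_pair; simpl in *; auto_derive;
  repeat match goal with
  | |- _ /\ _ => split
  | |- True => exact I
  | H : is_derive ?f ?x ?l |- ex_derive ?g ?x => exists l; exact H
  end;
  repeat match goal with
  | H : is_derive ?f ?x ?l |- context [Derive ?g ?x] => rewrite (is_derive_unique g x l H)
  end.

Definition Cnorm2 (z : C) : R := fst z ^ 2 + snd z ^ 2.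

Lemma Cnorm2_pos (z : C) : z <> RtoC 0 -> 0 < Cnorm2 z.
Proof.
  intros H. destruct z as [z1 z2]. unfold Cnorm2; simpl.
  destruct (Req_dec z1 0) as [-> | H1]; [destruct (Req_dec z2 0) as [-> | H2]|].
  - contradiction H. reflexivity.
  - pose proof (pow2_gt_0 z2 H2). nra.
  - pose proof (pow2_gt_0 z1 H1). nra.
Qed.

Lemma Cnorm2_neq0 (z : C) : z <> RtoC 0 -> Cnorm2 z <> 0.
Proof. intros H. exact (Rgt_not_eq _ _ (Cnorm2_pos z H)). Qed.

Lemma Cnorm2_Ci_mult (z : C) : Cnorm2 (Ci * z) = Cnorm2 z.
Proof. destruct z as [z1 z2]. unfold Cnorm2; simpl. ring. Qed.

Lemma is_derive_val_eq (f : R -> C) x (l l' : C) : is_derive f x l -> l = l' -> is_derive f x l'.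
Proof. intros H <-. exact H. Qed.

Lemma is_derive_Cconst (c : C) x : is_derive (fun _ : R => c) x (RtoC 0).
Proof. derive_components; ring. Qed.

Lemma is_derive_RtoC (f : R -> R) x df :
  is_derive f x df -> is_derive (fun t => RtoC (f t)) x (RtoC df).
Proof. intros Hf. derive_components; ring. Qed.

Lemma is_derive_Cplus (f g : R -> C) x df dg :
  is_derive f x df -> is_derive g x dg -> is_derive (fun t => f t + g t)%C x (df + dg)%C.
Proof. intros Hf Hg. derive_components; ring. Qed.

Lemma is_derive_Cminus (f g : R -> C) x df dg :
  is_derive f x df -> is_derive g x dg -> is_derive (fun t => f t - g t)%C x (df - dg)%C.
Proof. intros Hf Hg. derive_components; ring. Qed.

Lemma is_derive_Cmult (f g : R -> C) x df dg :
  is_derive f x df -> is_derive g x dg ->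
  is_derive (fun t => f t * g t)%C x (df * g x + f x * dg)%C.
Proof. intros Hf Hg. derive_components; ring. Qed.

Lemma is_derive_Cinv (f : R -> C) x df :
  is_derive f x df -> f x <> RtoC 0 ->
  is_derive (fun t => / f t)%C x (- df / (f x * f x))%C.
Proof.
  intros Hf Hn. pose proof (Cnorm2_neq0 _ Hn) as N. unfold Cnorm2 in N.
  derive_components; try exact N;
    field; repeat split; try exact N; intro E; apply N; nra.
Qed.

Lemma in_interval_between (a b : Rbar) s t x :
  in_interval a b s -> in_interval a b t -> Rmin s t <= x <= Rmax s t -> in_interval a b x.
Proof.
  unfold in_interval, Rmin, Rmax. intros [Has Hsb] [Hat Htb] Hx.
  destruct (Rle_dec s t), a, b; simpl in *; split; lra.
Qed.

Lemma derive_zero_const (a b : Rbar) (F : R -> R) s t :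
  (forall x, in_interval a b x -> is_derive F x 0) ->
  in_interval a b s -> in_interval a b t -> F t = F s.
Proof.
  intros HD Hs Ht.
  assert (Hx : forall x, Rmin s t <= x <= Rmax s t -> is_derive F x 0)
    by (intros x Hx; exact (HD x (in_interval_between a b s t x Hs Ht Hx))).
  destruct (MVT_gen F s t (fun _ => 0)) as [c [_ Hc]].
  - intros x Hx'. apply Hx. split; apply Rlt_le; apply Hx'.
  - intros x Hx'. apply continuity_pt_filterlim.
    exact (ex_derive_continuous (K := R_AbsRing) (V := R_NormedModule) F x (ex_intro _ 0 (Hx x Hx'))).
  - lra.
Qed.

Lemma derive_zero_const_C (a b : Rbar) (F : R -> C) s t :
  (forall x, in_interval a b x -> is_derive F x (RtoC 0)) ->
  in_interval a b s -> in_interval a b t -> F t = F s.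
Proof.
  intros HD Hs Ht. apply injective_projections.
  - apply (derive_zero_const a b (fun t => fst (F t))); auto.
    intros x Hx. exact (is_derive_fst _ _ _ (HD x Hx)).
  - apply (derive_zero_const a b (fun t => snd (F t))); auto.
    intros x Hx. exact (is_derive_snd _ _ _ (HD x Hx)).
Qed.

Lemma linear_ode_solution (a b : Rbar) (F : R -> R) k t :
  (forall x, in_interval a b x -> is_derive F x (k * F x)) ->
  in_interval a b 0 -> in_interval a b t -> F t = F 0 * exp (k * t).
Proof.
  intros HD H0 Ht.
  assert (E : F t * exp (- k * t) = F 0 * exp (- k * 0)).
  { apply (derive_zero_const a b (fun x => F x * exp (- k * x))); auto.
    intros x Hx. pose proof (HD x Hx). auto_derive.
    - exists (k * F x); assumption.
    - rewrite (is_derive_unique _ _ _ H : Derive (fun y : R => F y) x = _). ring. }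
  rewrite Rmult_0_r, exp_0, Rmult_1_r in E. rewrite <- E, Rmult_assoc, <- exp_plus.
  replace (- k * t + k * t) with 0 by ring. rewrite exp_0. ring.
Qed.

Lemma linear_ode_solution_C (a b : Rbar) (F : R -> C) k t :
  (forall x, in_interval a b x -> is_derive F x (RtoC k * F x)%C) ->
  in_interval a b 0 -> in_interval a b t -> F t = (F 0 * RtoC (exp (k * t)))%C.
Proof.
  intros HD H0 Ht. apply injective_projections; simpl.
  - rewrite (linear_ode_solution a b (fun x => fst (F x)) k t); auto; [ring|].
    intros x Hx. pose proof (is_derive_fst _ _ _ (HD x Hx)) as D; simpl in D.
    replace (k * fst (F x) - 0 * snd (F x)) with (k * fst (F x)) in D by ring. exact D.
  - rewrite (linear_ode_solution a b (fun x => snd (F x)) k t); auto; [ring|].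
    intros x Hx. pose proof (is_derive_snd _ _ _ (HD x Hx)) as D; simpl in D.
    replace (k * snd (F x) + 0 * fst (F x)) with (k * snd (F x)) in D by ring. exact D.
Qed.

Lemma Cnorm2_const_of_rotation (a b : Rbar) (F : R -> C) (k : R -> R) s t :
  (forall x, in_interval a b x -> is_derive F x (Ci * RtoC (k x) * F x)%C) ->
  in_interval a b s -> in_interval a b t -> Cnorm2 (F t) = Cnorm2 (F s).
Proof.
  intros HD Hs Ht. destruct (C_fun_components F) as (F1 & F2 & ->). unfold Cnorm2; simpl.
  apply (derive_zero_const a b (fun x => F1 x ^ 2 + F2 x ^ 2)); auto.
  intros x Hx. pose proof (is_derive_fst _ _ _ (HD x Hx)) as D1.
  pose proof (is_derive_snd _ _ _ (HD x Hx)) as D2. simpl in D1, D2.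
  auto_derive.
  - split; [eexists; exact D1 | split; [eexists; exact D2 | exact I]].
  - rewrite (is_derive_unique _ _ _ D1 : Derive (fun y : R => F1 y) x = _).
    rewrite (is_derive_unique _ _ _ D2 : Derive (fun y : R => F2 y) x = _). ring.
Qed.

Lemma on_circle_of_Cnorm2 (S : R -> Prop) (f : R -> C) c r2 :
  0 < r2 -> (forall t, S t -> Cnorm2 (f t - c) = r2) -> on_circle S f.
Proof.
  intros Hr H. exists c, (sqrt r2). split; [apply sqrt_lt_R0; exact Hr|].
  intros t Ht. unfold Cmod. rewrite <- (H t Ht). reflexivity.
Qed.

Lemma on_circle_ext (S : R -> Prop) (f g : R -> C) :
  (forall t, S t -> f t = g t) -> on_circle S g -> on_circle S f.
Proof.
  intros E [c [r [Hr H]]]. exists c, r. split; [exact Hr|].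
  intros t Ht. rewrite E; auto.
Qed.

Lemma on_line_ext (S : R -> Prop) (f g : R -> C) :
  (forall t, S t -> f t = g t) -> on_line S g -> on_line S f.
Proof.
  intros E [p [d [Hd H]]]. exists p, d. split; [exact Hd|].
  intros t Ht. rewrite E; auto.
Qed.

(* The circle [|z - c|^2 = r2] passes through 0 iff [K = 0]; its image under
   [z |-> 1/z] is then the line [2 Re (c w) = 1], otherwise the circle of centre
   [conj c / K] and squared radius [r2 / K^2]. *)
Lemma inversion_on_circle_or_line (S : R -> Prop) (z : R -> C) (c : C) r2 :
  0 < r2 -> (forall t, S t -> z t <> RtoC 0 /\ Cnorm2 (z t - c) = r2) ->
  on_circle S (fun t => / z t - RtoC 1)%C \/ on_line S (fun t => / z t - RtoC 1)%C.
Proof.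
  intros Hr H. destruct c as [c1 c2]. set (K := c1 ^ 2 + c2 ^ 2 - r2).
  destruct (Req_dec K 0) as [HK | HK].
  - right. set (C2 := c1 ^ 2 + c2 ^ 2).
    assert (HC : C2 <> 0) by (unfold K, C2 in *; lra).
    exists (c1 / (2 * C2) - 1, - c2 / (2 * C2)), (c2 / C2, c1 / C2). split.
    { intro E. injection E; intros E1 E2. apply HC. unfold C2.
      assert (c1 = 0) by (apply (Rmult_eq_reg_r (/ C2)); [lra | apply Rinv_neq_0_compat; auto]).
      assert (c2 = 0) by (apply (Rmult_eq_reg_r (/ C2)); [lra | apply Rinv_neq_0_compat; auto]).
      subst; ring. }
    intros t Ht. destruct (H t Ht) as [Hz Hc].
    pose proof (Cnorm2_neq0 _ Hz) as Nz. destruct (z t) as [z1 z2].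
    unfold Cnorm2 in Hc, Nz. simpl in Hc, Nz.
    assert (HL : z1 * (z1 * 1) + z2 * (z2 * 1) = 2 * (c1 * z1 + c2 * z2)) by (unfold K in *; nra).
    rewrite HL in Nz. exists ((c2 * z1 - c1 * z2) / (2 * (c1 * z1 + c2 * z2))).
    unfold C2 in *. apply injective_projections; simpl; rewrite HL;
      field; (split; [intro E; apply HC; nra | lra]).
  - left. apply (on_circle_of_Cnorm2 S _ (c1 / K - 1, - c2 / K) (r2 / K ^ 2)).
    { apply Rdiv_lt_0_compat; [exact Hr | apply pow2_gt_0; exact HK]. }
    intros t Ht. destruct (H t Ht) as [Hz Hc].
    pose proof (Cnorm2_neq0 _ Hz) as Nz. destruct (z t) as [z1 z2].
    unfold Cnorm2 in *. simpl in *. unfold K in *. rewrite <- Hc in *.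
    field; repeat split; try assumption; intro E; apply HK; lra.
Qed.

Lemma mobius_on_circle (S : R -> Prop) (u0 Om : C) (s : R -> R) :
  u0 <> RtoC 0 -> Im Om <> 0 ->
  (forall t, S t -> (RtoC 1 - Om * RtoC (s t))%C <> RtoC 0) ->
  on_circle S (fun t => u0 / (RtoC 1 - Om * RtoC (s t)) - RtoC 1)%C.
Proof.
  intros Hu Hb H. pose proof (Cnorm2_neq0 _ Hu) as Nu.
  destruct u0 as [x y], Om as [al be]. unfold Im, Cnorm2 in *. simpl in Hb, Nu.
  apply (on_circle_of_Cnorm2 S _ ((x, y) * ((/ 2)%R, (al / (2 * be))%R) - RtoC 1)%C
    ((x ^ 2 + y ^ 2) * ((al ^ 2 + be ^ 2) / (4 * be ^ 2)))).
  { assert (0 < be ^ 2) by (apply pow2_gt_0; exact Hb).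
    apply Rmult_lt_0_compat; [nra | apply Rdiv_lt_0_compat; nra]. }
  intros t Ht. pose proof (Cnorm2_neq0 _ (H t Ht)) as N. unfold Cnorm2 in *. simpl in N.
  simpl. field. split; [exact Hb | intro E; apply N; nra].
Qed.

Lemma mobius_on_line (S : R -> Prop) (u0 Om : C) (s : R -> R) :
  u0 <> RtoC 0 -> Im Om = 0 ->
  (forall t, S t -> (RtoC 1 - Om * RtoC (s t))%C <> RtoC 0) ->
  on_line S (fun t => u0 / (RtoC 1 - Om * RtoC (s t)) - RtoC 1)%C.
Proof.
  intros Hu Hb H. destruct Om as [al be]. unfold Im in Hb. simpl in Hb. subst be.
  exists (RtoC (-1)), u0. split; [exact Hu|].
  intros t Ht. pose proof (Cnorm2_neq0 _ (H t Ht)) as N. unfold Cnorm2 in N. simpl in N.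
  exists (/ (1 - al * s t)). destruct u0 as [x y].
  apply injective_projections; simpl; field; intro E; apply N; nra.
Qed.

Lemma theta_0 nu : theta nu 0 = 0.
Proof.
  unfold theta. destruct (Req_EM_T nu 0); [reflexivity|].
  rewrite Rmult_0_r, exp_0. field. assumption.
Qed.

Lemma is_derive_theta nu t : is_derive (theta nu) t (exp (- nu * t)).
Proof.
  unfold theta. destruct (Req_EM_T nu 0) as [E | E].
  - subst. replace (- 0 * t) with 0 by ring. rewrite exp_0. auto_derive; auto.
  - auto_derive; auto. field. exact E.
Qed.

#[local] Set Implicit Arguments.
Record pole_system (nu : R) (a b : Rbar) (w v : R -> C) (wav : R -> R) : Prop := {
  zero_in_interval : in_interval a b 0;
  v_neq_m1 : forall t, in_interval a b t -> v t <> (- RtoC 1)%C;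
  derive_w : forall t, in_interval a b t ->
    is_derive w t ((Ci * RtoC (wav t) - RtoC nu) * w t
                   + RtoC 2 * (w t * w t) / (RtoC 1 + v t))%C;
  derive_v : forall t, in_interval a b t -> is_derive v t (w t);
  derive_wav : forall t, in_interval a b t -> is_derive wav t (- nu * wav t) }.
#[local] Unset Implicit Arguments.

Section PoleDynamics.

Context {nu : R} {a b : Rbar} {w v : R -> C} {wav : R -> R}.
Hypothesis sys : pole_system nu a b w v wav.

Local Notation I := (in_interval a b).

Let I0 : I 0 := zero_in_interval sys.

Lemma wav_explicit t : I t -> wav t = wav 0 * exp (- nu * t).
Proof. intros Ht. exact (linear_ode_solution a b wav (- nu) t (derive_wav sys) I0 Ht). Qed.

Let zeta t := (/ (RtoC 1 + v t))%C.
Let eta t := (w t * (zeta t * zeta t))%C.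

Lemma one_plus_v_neq0 t : I t -> (RtoC 1 + v t)%C <> RtoC 0.
Proof.
  intros Ht E. apply (v_neq_m1 sys Ht).
  replace (v t) with (RtoC 1 + v t - RtoC 1)%C by ring. rewrite E. ring.
Qed.

Lemma zeta_neq0 t : I t -> zeta t <> RtoC 0.
Proof.
  intros Ht E. apply C1_nz.
  rewrite <- (Cinv_l (RtoC 1 + v t)) by exact (one_plus_v_neq0 t Ht).
  fold (zeta t). rewrite E. ring.
Qed.

Lemma v_of_zeta t : I t -> v t = (/ zeta t - RtoC 1)%C.
Proof. intros Ht. unfold zeta. field. exact (one_plus_v_neq0 t Ht). Qed.

Lemma is_derive_zeta t : I t -> is_derive zeta t (- eta t)%C.
Proof.
  intros Ht.
  replace (- eta t)%C with (- (RtoC 0 + w t) / ((RtoC 1 + v t) * (RtoC 1 + v t)))%C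
    by (unfold eta, zeta; field; exact (one_plus_v_neq0 t Ht)).
  apply is_derive_Cinv; [|exact (one_plus_v_neq0 t Ht)].
  exact (is_derive_Cplus _ _ _ _ _ (is_derive_Cconst _ t) (derive_v sys Ht)).
Qed.

Lemma is_derive_eta t : I t -> is_derive eta t ((Ci * RtoC (wav t) - RtoC nu) * eta t)%C.
Proof.
  intros Ht. pose proof (one_plus_v_neq0 t Ht).
  eapply is_derive_val_eq.
  - exact (is_derive_Cmult _ _ _ _ _ (derive_w sys Ht)
      (is_derive_Cmult _ _ _ _ _ (is_derive_zeta t Ht) (is_derive_zeta t Ht))).
  - unfold eta, zeta. field. assumption.
Qed.

Section VanishingAverage.

Hypothesis wav0 : wav 0 = 0.

Lemma eta_explicit t : I t -> eta t = (eta 0 * RtoC (exp (- nu * t)))%C.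
Proof.
  intros Ht. apply (linear_ode_solution_C a b); [|exact I0|exact Ht].
  intros x Hx. eapply is_derive_val_eq; [exact (is_derive_eta x Hx)|].
  rewrite (wav_explicit x Hx), wav0, Rmult_0_l.
  apply injective_projections; simpl; ring.
Qed.

Lemma zeta_explicit t : I t -> zeta t = (zeta 0 - eta 0 * RtoC (theta nu t))%C.
Proof.
  intros Ht.
  assert (E : (zeta t + eta 0 * RtoC (theta nu t))%C = (zeta 0 + eta 0 * RtoC (theta nu 0))%C).
  { apply (derive_zero_const_C a b (fun x => zeta x + eta 0 * RtoC (theta nu x))%C); auto.
    intros x Hx. eapply is_derive_val_eq.
    - exact (is_derive_Cplus _ _ _ _ _ (is_derive_zeta x Hx)
        (is_derive_Cmult _ _ _ _ _ (is_derive_Cconst (eta 0) x)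
          (is_derive_RtoC _ _ _ (is_derive_theta nu x)))).
    - rewrite (eta_explicit x Hx). ring. }
  rewrite theta_0 in E.
  replace (zeta t) with (zeta t + eta 0 * RtoC (theta nu t) - eta 0 * RtoC (theta nu t))%C
    by ring.
  rewrite E. ring.
Qed.

Lemma mobius_denominator_eq t : I t ->
  (RtoC 1 - w 0 / (RtoC 1 + v 0) * RtoC (theta nu t))%C = (zeta t * (RtoC 1 + v 0))%C.
Proof.
  intros Ht. rewrite (zeta_explicit t Ht). unfold eta, zeta.
  field. exact (one_plus_v_neq0 0 I0).
Qed.

Lemma mobius_denominator_neq0 t : I t ->
  (RtoC 1 - w 0 / (RtoC 1 + v 0) * RtoC (theta nu t))%C <> RtoC 0.
Proof.
  intros Ht. rewrite (mobius_denominator_eq t Ht). intros E.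
  apply (zeta_neq0 t Ht). pose proof (one_plus_v_neq0 0 I0).
  replace (zeta t) with (zeta t * (RtoC 1 + v 0) / (RtoC 1 + v 0))%C by (field; assumption).
  rewrite E. field. assumption.
Qed.

Lemma v_explicit t : I t ->
  v t = ((v 0 + RtoC 1) / (RtoC 1 - w 0 / (RtoC 1 + v 0) * RtoC (theta nu t)) - RtoC 1)%C.
Proof.
  intros Ht. rewrite (mobius_denominator_eq t Ht), (v_of_zeta t Ht).
  field. split; [exact (one_plus_v_neq0 0 I0) | exact (zeta_neq0 t Ht)].
Qed.

End VanishingAverage.

Section NonvanishingAverage.

Hypothesis wav0 : wav 0 <> 0.

Lemma wav_neq0 t : I t -> wav t <> 0.
Proof.
  intros Ht. rewrite (wav_explicit t Ht).
  apply Rmult_integral_contrapositive_currified; [exact wav0 | apply Rgt_not_eq, exp_pos].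
Qed.

Let rho t := (eta t / RtoC (wav t))%C.

Lemma RtoC_wav_neq0 t : I t -> RtoC (wav t) <> RtoC 0.
Proof. intros Ht E. apply (wav_neq0 t Ht). injection E. auto. Qed.

Lemma is_derive_rho t : I t -> is_derive rho t (Ci * eta t)%C.
Proof.
  intros Ht. eapply is_derive_val_eq.
  - exact (is_derive_Cmult _ _ _ _ _ (is_derive_eta t Ht)
      (is_derive_Cinv _ _ _ (is_derive_RtoC _ _ _ (derive_wav sys Ht)) (RtoC_wav_neq0 t Ht))).
  - rewrite RtoC_mult, RtoC_opp. field. exact (RtoC_wav_neq0 t Ht).
Qed.

Lemma zeta_center_const t : I t -> (zeta t - Ci * rho t)%C = (zeta 0 - Ci * rho 0)%C.
Proof.
  intros Ht. apply (derive_zero_const_C a b (fun x => zeta x - Ci * rho x)%C); auto.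
  intros x Hx. eapply is_derive_val_eq.
  - exact (is_derive_Cminus _ _ _ _ _ (is_derive_zeta x Hx)
      (is_derive_Cmult _ _ _ _ _ (is_derive_Cconst Ci x) (is_derive_rho x Hx))).
  - apply injective_projections; simpl; ring.
Qed.

Lemma Cnorm2_rho_const t : I t -> Cnorm2 (rho t) = Cnorm2 (rho 0).
Proof.
  intros Ht. apply (Cnorm2_const_of_rotation a b rho wav); auto.
  intros x Hx. eapply is_derive_val_eq; [exact (is_derive_rho x Hx)|].
  unfold rho. field. exact (RtoC_wav_neq0 x Hx).
Qed.

Lemma zeta_on_circle t : I t -> Cnorm2 (zeta t - (zeta 0 - Ci * rho 0)) = Cnorm2 (rho 0).
Proof.
  intros Ht. rewrite <- (zeta_center_const t Ht), <- (Cnorm2_rho_const t Ht).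
  replace (zeta t - (zeta t - Ci * rho t))%C with (Ci * rho t)%C by ring.
  apply Cnorm2_Ci_mult.
Qed.

Lemma rho0_neq0 : w 0 <> RtoC 0 -> rho 0 <> RtoC 0.
Proof.
  intros Hw0 E. apply Hw0. unfold rho, eta in E.
  pose proof (zeta_neq0 0 I0). pose proof (RtoC_wav_neq0 0 I0).
  replace (w 0) with ((w 0 * (zeta 0 * zeta 0) / RtoC (wav 0)) * RtoC (wav 0)
    / (zeta 0 * zeta 0))%C by (field; auto).
  rewrite E. field. auto.
Qed.

Lemma v_on_circle_or_line : w 0 <> RtoC 0 -> on_circle I v \/ on_line I v.
Proof.
  intros Hw0. pose proof (Cnorm2_pos _ (rho0_neq0 Hw0)) as Hr.
  destruct (inversion_on_circle_or_line I zeta _ _ Hr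
    (fun t Ht => conj (zeta_neq0 t Ht) (zeta_on_circle t Ht))) as [H | H].
  - left. exact (on_circle_ext I v _ v_of_zeta H).
  - right. exact (on_line_ext I v _ v_of_zeta H).
Qed.

End NonvanishingAverage.

End PoleDynamics.

Theorem mainTheorem14
  (nu : R) (a b : Rbar) (w v : R -> C) (wav : R -> R) :
  0 <= nu ->
  Rbar_lt a 0 -> Rbar_lt 0 b ->
  v 0 <> (- RtoC 1)%C ->
  w 0 <> 0%C ->
  (forall t, in_interval a b t -> v t <> (- RtoC 1)%C) ->
  (forall t, in_interval a b t ->
     is_derive w t
       ((Ci * RtoC (wav t) - RtoC nu) * w t
        + RtoC 2 * (w t * w t) / (RtoC 1 + v t))%C) ->
  (forall t, in_interval a b t -> is_derive v t (w t)) ->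
  (forall t, in_interval a b t -> is_derive wav t (- nu * wav t)) ->
  (on_circle (in_interval a b) v \/ on_line (in_interval a b) v) /\
  (wav 0 = 0 ->
    let Omega := (w 0 / (RtoC 1 + v 0))%C in
    (forall t, in_interval a b t ->
       v t = ((v 0 + RtoC 1) / (RtoC 1 - Omega * RtoC (theta nu t)) - RtoC 1)%C) /\
    (Im Omega <> 0 -> on_circle (in_interval a b) v) /\
    (Im Omega = 0 -> on_line (in_interval a b) v)).
Proof.
  intros _ Ha Hb _ Hw0 Hv Dw Dv Dwav.
  assert (sys : pole_system nu a b w v wav) by (split; auto; split; auto).
  destruct (Req_dec (wav 0) 0) as [wav0 | wav0].
  - set (Omega := (w 0 / (RtoC 1 + v 0))%C).
    assert (U0 : (v 0 + RtoC 1)%C <> RtoC 0)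
      by (rewrite Cplus_comm; exact (one_plus_v_neq0 sys 0 (zero_in_interval sys))).
    pose proof (v_explicit sys wav0) as Hform.
    pose proof (mobius_denominator_neq0 sys wav0) as Hden.
    assert (Hcircle : Im Omega <> 0 -> on_circle (in_interval a b) v)
      by (intros HI; exact (on_circle_ext _ _ _ Hform (mobius_on_circle _ _ _ _ U0 HI Hden))).
    assert (Hline : Im Omega = 0 -> on_line (in_interval a b) v)
      by (intros HI; exact (on_line_ext _ _ _ Hform (mobius_on_line _ _ _ _ U0 HI Hden))).
    split.
    + destruct (Req_dec (Im Omega) 0); auto.
    + intros _. exact (conj Hform (conj Hcircle Hline)).
  - split; [exact (v_on_circle_or_line sys wav0 Hw0) | contradiction].
Qed.
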